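(* For the linear regression for classification (LRC) problem $\min_{D}\|F-D\tilde{A}\|_F^2$, when the ideal graph condition for classification is satisfied, the fitting error achieves the minimum value, $\epsilon=1$, and the spectral risk is \[ \gamma=1+\frac{\bar{\zeta}}{\beta}, \] with \[ 1+\frac{1}{\zeta_\rho |\cos \theta_u|}\leq \gamma \leq 1+\frac{\zeta_\rho}{|\cos \theta_u|}. \]
   Context: Let $A=[A_1,\dots,A_n]\in\mathbb{R}^{p\times n}$ be a mean-removed data matrix ($A\mathbf{1}=\mathbf{0}$) and $F=[F_1,\dots,F_n]\in\mathbb{R}^{K\times n}$ the class indicator matrix ($F_i$ has a one in the entry of the class of sample $i$ and zeros elsewhere). Define $\beta\doteq-\min_{ij}(A^TA)_{ij}$ (which is positive) and the augmented data matrix $\tilde{A}=\begin{bmatrix}\sqrt{\beta}\mathbf{1}^T\\ A\end{bmatrix}$, assumed to have rank $p+1$, so that the LRC solution is $D^*=F\tilde{A}^T(\tilde{A}\tilde{A}^T)^{-1}$. Let $W\doteq\tilde{A}^T\tilde{A}$ (nonnegative by the choice of $\beta$). The ideal graph condition for classification holds if $W_{ij}=0$ whenever $F_i\neq F_j$. The (relative) fitting error is $\epsilon\doteq\|F-D^*\tilde{A}\|_F^2/\|D^*\tilde{A}\|_F^2+1$ and the (relative) spectral risk is $\gamma\doteq\|D^*\|_F^2\|\tilde{A}\|_F^2/\|D^*\tilde{A}\|_F^2$. Let $\bar{\zeta}\doteq\|A\|_F^2/n$ be the mean squared length of the original data, $\zeta_\rho\doteq\max_i\|A_i\|_2^2/\min_i\|A_i\|_2^2$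 the ratio between maximum and minimum squared lengths, and $\theta_u$ the maximum included angle between pairs of original data vectors $A_i,A_j$. *)

From HB Require Import structures.
From mathcomp Require Import all_boot all_order all_algebra.
From mathcomp Require Import reals trigo.
Set Implicit Arguments. Unset Strict Implicit. Unset Printing Implicit Defensive.
Import Order.TTheory GRing.Theory Num.Theory.
Local Open Scope ring_scope.

Section LRC.
Variable R : realType.

(* minimum / maximum of f over the x : T satisfying P (0 if there is none) *)
Definition fminP (T : finType) (P : pred T) (f : T -> R) : R :=
  match [pick x | P x] with
  | Some x0 => \big[Num.min/f x0]_(x | P x) f x
  | None => 0 end.
Definition fmaxP (T : finType) (P : pred T) (f : T -> R) : R :=
  match [pick x | P x] with
  | Some x0 => \big[Num.max/f x0]_(x | P x) f x
  | None => 0 end.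

Definition frob2 m n (M : 'M[R]_(m, n)) : R := \sum_i \sum_j M i j ^+ 2.

(* squared Euclidean length of the i-th column (sample) of A *)
Definition colsq p n (A : 'M[R]_(p, n)) (i : 'I_n) : R := \sum_k A k i ^+ 2.

Definition indicator K n (lab : 'I_n -> 'I_K) : 'M[R]_(K, n) :=
  \matrix_(k, i) (lab i == k)%:R.

Definition beta p n (A : 'M[R]_(p, n)) : R :=
  - fminP predT (fun ij : 'I_n * 'I_n => (A^T *m A) ij.1 ij.2).

Definition Atilde p n (A : 'M[R]_(p, n)) : 'M[R]_(1 + p, n) :=
  col_mx (const_mx (Num.sqrt (beta A))) A.

Definition Dstar K p n (F : 'M[R]_(K, n)) (A : 'M[R]_(p, n)) : 'M[R]_(K, 1 + p) :=
  F *m (Atilde A)^T *m invmx (Atilde A *m (Atilde A)^T).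

Definition Wgraph p n (A : 'M[R]_(p, n)) : 'M[R]_n := (Atilde A)^T *m Atilde A.

Definition ideal_graph K p n (F : 'M[R]_(K, n)) (A : 'M[R]_(p, n)) : Prop :=
  forall i j : 'I_n, col i F != col j F -> Wgraph A i j = 0.

Definition fit_err K p n (F : 'M[R]_(K, n)) (A : 'M[R]_(p, n)) : R :=
  frob2 (F - Dstar F A *m Atilde A) / frob2 (Dstar F A *m Atilde A) + 1.

Definition spec_risk K p n (F : 'M[R]_(K, n)) (A : 'M[R]_(p, n)) : R :=
  frob2 (Dstar F A) * frob2 (Atilde A) / frob2 (Dstar F A *m Atilde A).

Definition zeta_bar p n (A : 'M[R]_(p, n)) : R := frob2 A / n%:R.

Definition zeta_rho p n (A : 'M[R]_(p, n)) : R :=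
  fmaxP predT (colsq A) / fminP predT (colsq A).

Definition angle p n (A : 'M[R]_(p, n)) (i j : 'I_n) : R :=
  acos ((A^T *m A) i j / (Num.sqrt (colsq A i) * Num.sqrt (colsq A j))).

Definition theta_u p n (A : 'M[R]_(p, n)) : R :=
  fmaxP (fun ij : 'I_n * 'I_n => ij.1 != ij.2) (fun ij => angle A ij.1 ij.2).

End LRC.

From mathcomp Require Import all_boot all_order all_algebra.
From mathcomp Require Import reals trigo.
From mathcomp Require Import ring lra.

(** The Gram matrix [G = A^T A] of centred data has zero row sums and a
    positive diagonal, so its smallest entry is negative, [beta > 0], and
    [W = beta 11^T + G].  Under the ideal graph condition each class indicator
    row is an eigenvector, [F W = n beta F]; hence [D* = F Atilde^T / (n beta)],
    [D* Atilde = F] exactly, [|D*|^2 = |F|^2 / (n beta) = 1 / beta] and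
    [|Atilde|^2 = n beta + |A|^2], which gives [gamma = 1 + zeta_bar / beta].
    For the bounds, [beta = - cos theta_kl |A_k| |A_l|] at the most negative
    entry of [G], while the widest angle [theta_u] has the smallest cosine;
    so [beta] lies between [|cos theta_u|] times the smallest and the largest
    squared length, just as [zeta_bar] lies between these lengths. *)

Set Implicit Arguments.
Unset Strict Implicit.
Unset Printing Implicit Defensive.

Import Order.TTheory GRing.Theory Num.Theory.
Local Open Scope ring_scope.

Section Extrema.
Variables (R : realType) (T : finType) (P : pred T) (f : T -> R).

Lemma fminP_le z : P z -> fminP P f <= f z.
Proof.
move=> Pz; rewrite /fminP; case: pickP => [x0 _|/(_ z)]; last by rewrite Pz.
by rewrite (bigD1 z) //= ge_min lexx.
Qed.

Lemma fmaxP_ge z : P z -> f z <= fmaxP P f.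
Proof.
move=> Pz; rewrite /fmaxP; case: pickP => [x0 _|/(_ z)]; last by rewrite Pz.
by rewrite (bigD1 z) //= le_max lexx.
Qed.

Lemma fminP_attained z : P z -> exists2 y, P y & fminP P f = f y.
Proof.
move=> Pz; rewrite /fminP; case: pickP => [x0 Px0|/(_ z)]; last by rewrite Pz.
elim/big_ind: _ => [|a b [y1 P1 ->] [y2 P2 ->]|y Py]; first by exists x0.
- by rewrite minEle; case: ifP => _; [exists y1 | exists y2].
- by exists y.
Qed.

Lemma fmaxP_attained z : P z -> exists2 y, P y & fmaxP P f = f y.
Proof.
move=> Pz; rewrite /fmaxP; case: pickP => [x0 Px0|/(_ z)]; last by rewrite Pz.
elim/big_ind: _ => [|a b [y1 P1 ->] [y2 P2 ->]|y Py]; first by exists x0.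
- by rewrite maxEle; case: ifP => _; [exists y2 | exists y1].
- by exists y.
Qed.

End Extrema.

Section Frobenius.
Variable R : realType.

Lemma frob2_ge0 m k (M : 'M[R]_(m, k)) : 0 <= frob2 M.
Proof. by apply: sumr_ge0 => i _; apply: sumr_ge0 => j _; apply: sqr_ge0. Qed.

Lemma frob2_eq0 m k (M : 'M[R]_(m, k)) : (frob2 M == 0) = (M == 0).
Proof.
apply/idP/eqP => [/eqP M0|->]; last first.
  by rewrite /frob2 big1 // => i _; rewrite big1 // => j _; rewrite mxE expr0n.
have row0 i : \sum_j M i j ^+ 2 = 0.
  apply: (psumr_eq0P _ M0) => // l _.
  by apply: sumr_ge0 => j _; apply: sqr_ge0.
apply/matrixP => i j; rewrite mxE; apply/eqP; rewrite -sqrf_eq0; apply/eqP.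
by apply: (psumr_eq0P _ (row0 i)) => // l _; apply: sqr_ge0.
Qed.

Lemma frob2_tr m k (M : 'M[R]_(m, k)) : frob2 M = \tr (M *m M^T).
Proof.
rewrite /frob2 /mxtrace; apply: eq_bigr => i _; rewrite mxE.
by apply: eq_bigr => j _; rewrite mxE expr2.
Qed.

Lemma frob2Z m k (c : R) (M : 'M[R]_(m, k)) : frob2 (c *: M) = c ^+ 2 * frob2 M.
Proof.
rewrite /frob2 mulr_sumr; apply: eq_bigr => i _; rewrite mulr_sumr.
by apply: eq_bigr => j _; rewrite mxE exprMn.
Qed.

Lemma frob2_col_mx m1 m2 k (U : 'M[R]_(m1, k)) (D : 'M[R]_(m2, k)) :
  frob2 (col_mx U D) = frob2 U + frob2 D.
Proof.
rewrite /frob2 big_split_ord; congr (_ + _); apply: eq_bigr => i _;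
  by apply: eq_bigr => j _; rewrite ?col_mxEu ?col_mxEd.
Qed.

Lemma frob2_const m k (c : R) : frob2 (const_mx c : 'M_(m, k)) = (m * k)%:R * c ^+ 2.
Proof.
rewrite /frob2 (eq_bigr (fun=> \sum_(j < k) c ^+ 2)); last first.
  by move=> i _; apply: eq_bigr => j _; rewrite mxE.
by rewrite !sumr_const !card_ord -mulrnA mulr_natl mulnC.
Qed.

Lemma frob2_indicator K n (lab : 'I_n -> 'I_K) : frob2 (indicator R lab) = n%:R.
Proof.
rewrite /frob2 exchange_big /= -[n in n%:R]card_ord -sumr_const.
apply: eq_bigr => i _; rewrite (bigD1 (lab i)) //= big1 ?addr0.
  by rewrite mxE eqxx expr1n.
by move=> q qi; rewrite mxE eq_sym (negbTE qi) expr0n.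
Qed.

Lemma frob2_colsq p n (A : 'M[R]_(p, n)) : frob2 A = \sum_i colsq A i.
Proof. exact: exchange_big. Qed.

Lemma colsq_gt0 p n (A : 'M[R]_(p, n)) i : col i A != 0 -> 0 < colsq A i.
Proof.
have -> : colsq A i = frob2 (col i A).
  by apply: eq_bigr => k _; rewrite big_ord1 mxE.
by rewrite lt_def frob2_ge0 frob2_eq0 andbT.
Qed.

Lemma unitmx_mul_tr m k (M : 'M[R]_(m, k)) : row_free M -> M *m M^T \in unitmx.
Proof.
move=> freeM; rewrite -row_free_unit -kermx_eq0.
set N := kermx _; have NMMt : N *m M *m M^T = 0 by rewrite -mulmxA mulmx_ker.
have : frob2 (N *m M) == 0.
  by rewrite frob2_tr trmx_mul mulmxA NMMt mul0mx mxtrace0.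
by rewrite frob2_eq0 mulmx_free_eq0.
Qed.

End Frobenius.

Section Cosine.
Variable R : realType.

Lemma unit_dot_bounds (I : finType) (x y : I -> R) :
  \sum_i x i ^+ 2 = 1 -> \sum_i y i ^+ 2 = 1 -> -1 <= \sum_i x i * y i <= 1.
Proof.
move=> x1 y1.
have sq_sumE s : \sum_i (x i + s * y i) ^+ 2 =
    \sum_i x i ^+ 2 + 2 * s * \sum_i x i * y i + s ^+ 2 * \sum_i y i ^+ 2.
  by rewrite !mulr_sumr -!big_split; apply: eq_bigr => i _ /=; ring.
have sq_sum_ge0 s : 0 <= \sum_i (x i + s * y i) ^+ 2.
  by apply: sumr_ge0 => i _; apply: sqr_ge0.
move: (sq_sum_ge0 1) (sq_sum_ge0 (-1)); rewrite !sq_sumE x1 y1; lra.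
Qed.

Definition cosine p n (A : 'M[R]_(p, n)) (i j : 'I_n) : R :=
  (A^T *m A) i j / (Num.sqrt (colsq A i) * Num.sqrt (colsq A j)).

Lemma cosine_bounds p n (A : 'M[R]_(p, n)) i j :
  col i A != 0 -> col j A != 0 -> -1 <= cosine A i j <= 1.
Proof.
move=> /colsq_gt0 Ai_gt0 /colsq_gt0 Aj_gt0.
have normalized l : 0 < colsq A l ->
    \sum_k (A k l / Num.sqrt (colsq A l)) ^+ 2 = 1.
  move=> Al_gt0; under eq_bigr do rewrite expr_div_n.
  by rewrite -mulr_suml sqr_sqrtr ?divff ?gt_eqF // ltW.
have := unit_dot_bounds (normalized i Ai_gt0) (normalized j Aj_gt0).
suff -> : \sum_k A k i / Num.sqrt (colsq A i) * (A k j / Num.sqrt (colsq A j))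
  = cosine A i j by [].
rewrite /cosine mxE mulr_suml; apply: eq_bigr => k _.
by rewrite mulf_div mxE.
Qed.

Lemma gram_cosine p n (A : 'M[R]_(p, n)) i j :
  col i A != 0 -> col j A != 0 ->
  (A^T *m A) i j = cosine A i j * (Num.sqrt (colsq A i) * Num.sqrt (colsq A j)).
Proof.
move=> /colsq_gt0 Ai_gt0 /colsq_gt0 Aj_gt0.
by rewrite mulfVK // mulf_neq0 // gt_eqF // sqrtr_gt0.
Qed.

Lemma ler_acos (x y : R) : -1 <= x <= 1 -> -1 <= y <= 1 ->
  (acos x <= acos y) = (y <= x).
Proof.
have acos_in (z : R) : -1 <= z <= 1 -> acos z \in `[0, pi].
  by move=> z1; rewrite in_itv /= acos_ge0 ?acos_lepi.
move=> x1 y1; rewrite leNgt -(ltr_cos (acos_in _ y1) (acos_in _ x1)).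
by rewrite !acosK ?in_itv //= -leNgt.
Qed.

End Cosine.

Section LeastSquares.
Variables (R : realType) (K m n : nat) (F : 'M[R]_(K, n)) (X : 'M[R]_(m, n)).
Variable c : R.
Hypotheses (c_neq0 : c != 0) (XXt_unit : X *m X^T \in unitmx).
Hypothesis F_eigen : F *m (X^T *m X) = c *: F.

Let D := F *m X^T *m invmx (X *m X^T).

Lemma lsq_solutionE : D = c^-1 *: (F *m X^T).
Proof.
have FXtXXt : F *m X^T *m (X *m X^T) = c *: (F *m X^T).
  by rewrite mulmxA -(mulmxA F) F_eigen scalemxAl.
by rewrite /D -{1}(scalerK c_neq0 (F *m X^T)) -FXtXXt -scalemxAl mulmxK.
Qed.

Lemma lsq_fit : D *m X = F.
Proof. by rewrite lsq_solutionE -scalemxAl -mulmxA F_eigen scalerA mulVf // scale1r. Qed.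

Lemma frob2_lsq : frob2 D = frob2 F / c.
Proof.
rewrite lsq_solutionE frob2Z !frob2_tr trmx_mul trmxK mulmxA -(mulmxA F) F_eigen.
by rewrite -scalemxAl mxtraceZ; field.
Qed.

End LeastSquares.

Section Gram.
Variables (R : realType) (p n : nat) (A : 'M[R]_(p, n)).
Local Notation G := (A^T *m A).

Lemma gram_diag i : G i i = colsq A i.
Proof. by rewrite mxE; apply: eq_bigr => k _; rewrite mxE expr2. Qed.

Lemma beta_ge_gram i j : - G i j <= beta A.
Proof. by rewrite lerN2 (fminP_le _ (z := (i, j))). Qed.

Lemma beta_attained (i : 'I_n) : exists k l, beta A = - G k l.
Proof.
rewrite /beta; have [[k l] _ ->] :=
  @fminP_attained _ _ predT (fun ij : 'I_n * 'I_n => G ij.1 ij.2) (i, i) isT.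
by exists k, l.
Qed.

Lemma Wgraph_gramE i j : 0 <= beta A -> Wgraph A i j = beta A + G i j.
Proof.
move=> beta_ge0; rewrite /Wgraph /Atilde tr_col_mx mul_row_col [LHS]mxE.
by congr (_ + _); rewrite !mxE big_ord1 !mxE -expr2 sqr_sqrtr.
Qed.

Lemma frob2_Atilde : 0 <= beta A -> frob2 (Atilde A) = n%:R * beta A + frob2 A.
Proof. by move=> beta_ge0; rewrite frob2_col_mx frob2_const mul1n sqr_sqrtr. Qed.

Hypothesis A_centered : A *m const_mx 1 = 0 :> 'cV[R]_p.

Lemma gram_col_sum0 j : \sum_i G i j = 0.
Proof.
transitivity (((const_mx 1 : 'rV[R]_n) *m G) 0 j).
  by rewrite [RHS]mxE; apply: eq_bigr => i _; rewrite [const_mx _ _ _]mxE mul1r.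
by rewrite mulmxA -[const_mx 1]trmx_const -trmx_mul A_centered trmx0 mul0mx mxE.
Qed.

Hypothesis A_col_neq0 : forall i, col i A != 0.

Lemma beta_gt0 (i : 'I_n) : 0 < beta A.
Proof.
rewrite ltNge; apply/negP => beta_le0.
have G_ge0 k : 0 <= G k i by rewrite -oppr_le0 (le_trans (beta_ge_gram _ _)).
have := psumr_eq0P (fun k _ => G_ge0 k) (gram_col_sum0 i) (i := i) isT.
by rewrite gram_diag => /eqP; rewrite gt_eqF // colsq_gt0.
Qed.

End Gram.

Section IdealGraph.
Variables (R : realType) (K p n : nat) (A : 'M[R]_(p, n)) (lab : 'I_n -> 'I_K).
Hypotheses (A_centered : A *m const_mx 1 = 0 :> 'cV[R]_p) (n_gt0 : (0 < n)%N).
Hypotheses (beta_gt0 : 0 < beta A) (Atilde_free : row_free (Atilde A)).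
Hypothesis ideal : ideal_graph (indicator R lab) A.
Local Notation F := (indicator R lab).

Lemma Wgraph_across_classes i j : lab i != lab j -> Wgraph A i j = 0.
Proof.
move=> lab_ij; apply: ideal; apply: contra lab_ij => /eqP/matrixP/(_ (lab i) 0).
by rewrite !mxE eqxx; case: eqP => [->|_ /eqP] //; rewrite oner_eq0.
Qed.

Lemma indicator_Wgraph : F *m Wgraph A = (n%:R * beta A) *: F.
Proof.
apply/matrixP => q i; rewrite !mxE.
have [<-|lab_iq] := eqVneq (lab i) q; last first.
  rewrite mulr0; apply: big1 => j _; rewrite mxE.
  have [lab_jq|] := eqVneq (lab j) q; last by rewrite mul0r.
  by rewrite Wgraph_across_classes ?mulr0 // lab_jq eq_sym.
rewrite mulr1; transitivity (\sum_j Wgraph A j i).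
  apply: eq_bigr => j _; rewrite mxE.
  have [_|lab_ji] := eqVneq (lab j) (lab i); first by rewrite mul1r.
  by rewrite mul0r Wgraph_across_classes.
under eq_bigr do rewrite Wgraph_gramE ?ltW //.
by rewrite big_split /= gram_col_sum0 // addr0 sumr_const card_ord mulr_natl.
Qed.

Let nbeta_neq0 : n%:R * beta A != 0.
Proof. by rewrite mulf_neq0 ?pnatr_eq0 -?lt0n ?gt_eqF. Qed.

Let Atilde_unit : Atilde A *m (Atilde A)^T \in unitmx.
Proof. exact: unitmx_mul_tr. Qed.

Lemma fit_err_ideal : fit_err F A = 1.
Proof.
rewrite /fit_err /Dstar (lsq_fit nbeta_neq0 Atilde_unit indicator_Wgraph) subrr.
have /eqP-> : frob2 (0 : 'M[R]_(K, n)) == 0 by rewrite frob2_eq0.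
by rewrite mul0r add0r.
Qed.

Lemma spec_risk_ideal : spec_risk F A = 1 + zeta_bar A / beta A.
Proof.
rewrite /spec_risk /Dstar (lsq_fit nbeta_neq0 Atilde_unit indicator_Wgraph).
rewrite (frob2_lsq nbeta_neq0 Atilde_unit indicator_Wgraph).
rewrite frob2_Atilde ?ltW // frob2_indicator /zeta_bar.
by field; rewrite pnatr_eq0 -lt0n n_gt0 gt_eqF.
Qed.

End IdealGraph.

Lemma ratio_bounds (R : realFieldType) (smin smax z b t : R) :
  0 < smin -> 0 < b -> smin <= z <= smax -> smin * t <= b <= smax * t ->
  1 / (smax / smin * t) <= z / b <= smax / smin / t.
Proof.
move=> smin_gt0 b_gt0 /andP[smin_z z_smax] /andP[smin_b b_smax].
have smax_gt0 : 0 < smax by apply: lt_le_trans z_smax; apply: lt_le_trans smin_z.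
have t_gt0 : 0 < t by rewrite -(pmulr_rgt0 _ smax_gt0) (lt_le_trans b_gt0).
have -> : 1 / (smax / smin * t) = smin / (smax * t) by field; rewrite !gt_eqF.
have -> : smax / smin / t = smax / (smin * t) by field; rewrite !gt_eqF.
apply/andP; split.
- apply: (@le_trans _ _ (smin / b)); last by rewrite ler_pM2r ?invr_gt0.
  by rewrite ler_pM2l // lef_pV2 ?posrE ?mulr_gt0.
- apply: (@le_trans _ _ (smax / b)); first by rewrite ler_pM2r ?invr_gt0.
  by rewrite ler_pM2l // lef_pV2 ?posrE ?mulr_gt0.
Qed.

Section AngleBounds.
Variables (R : realType) (p n : nat) (A : 'M[R]_(p, n)).
Hypotheses (A_col_neq0 : forall i, col i A != 0) (n_gt0 : (0 < n)%N).
Local Notation smin := (fminP predT (colsq A)).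
Local Notation smax := (fmaxP predT (colsq A)).

Lemma colsq_min_gt0 : 0 < smin.
Proof.
have [i _ ->] := @fminP_attained _ _ predT (colsq A) (Ordinal n_gt0) isT.
exact: colsq_gt0.
Qed.

Lemma sqrt_colsq_bounds i j :
  smin <= Num.sqrt (colsq A i) * Num.sqrt (colsq A j) <= smax.
Proof.
have colsq_ge0 k : 0 <= colsq A k by apply/ltW/colsq_gt0.
have smax_ge0 : 0 <= smax by apply: le_trans (colsq_ge0 i) (fmaxP_ge _ isT).
apply/andP; split.
- rewrite -[smin]sqr_sqrtr ?expr2; last exact/ltW/colsq_min_gt0.
  by apply: ler_pM; rewrite ?sqrtr_ge0 // ler_sqrt // fminP_le.
- rewrite -[smax]sqr_sqrtr // expr2.
  by apply: ler_pM; rewrite ?sqrtr_ge0 // ler_sqrt // fmaxP_ge.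
Qed.

Lemma zeta_bar_bounds : smin <= zeta_bar A <= smax.
Proof.
have n_pos : 0 < n%:R :> R by rewrite ltr0n.
rewrite /zeta_bar frob2_colsq; apply/andP; split.
- rewrite ler_pdivlMr // mulr_natr -[n in _ *+ n]card_ord -sumr_const.
  by apply: ler_sum => i _; apply: fminP_le.
- rewrite ler_pdivrMr // mulr_natr -[n in _ *+ n]card_ord -sumr_const.
  by apply: ler_sum => i _; apply: fmaxP_ge.
Qed.

Local Notation offdiag := (fun ij : 'I_n * 'I_n => ij.1 != ij.2).
Local Notation pair_angle := (fun ij : 'I_n * 'I_n => angle A ij.1 ij.2).

Lemma cos_theta_u_le k l : k != l ->
  exists i j, cos (theta_u A) = cosine A i j /\ cosine A i j <= cosine A k l.
Proof.
move=> kl; have [[i j] _ thetaE] := @fmaxP_attained _ _ offdiag pair_angle (k, l) kl.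
have cos_in i' j' : -1 <= cosine A i' j' <= 1.
  exact: cosine_bounds (A_col_neq0 i') (A_col_neq0 j').
exists i, j; split; first by rewrite /theta_u thetaE /angle acosK // in_itv /= cos_in.
rewrite -(ler_acos (cos_in k l) (cos_in i j)) -/(angle A k l) -/(angle A i j).
by have := @fmaxP_ge _ _ offdiag pair_angle (k, l) kl; rewrite thetaE.
Qed.

Hypothesis beta_gt0 : 0 < beta A.

Lemma beta_cos_bounds :
  smin * `|cos (theta_u A)| <= beta A <= smax * `|cos (theta_u A)|.
Proof.
have [k [l betaE]] := beta_attained A (Ordinal n_gt0).
have kl : k != l.
  apply: contraTneq beta_gt0 => eq_kl.
  by rewrite betaE -eq_kl gram_diag oppr_gt0 -leNgt ltW // colsq_gt0.
have [i [j [cosE cos_le]]] := cos_theta_u_le kl.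
have := beta_ge_gram A i j; rewrite betaE !gram_cosine // => Gij.
have /andP[smin_kl kl_smax] := sqrt_colsq_bounds k l.
have /andP[smin_ij ij_smax] := sqrt_colsq_bounds i j.
have smin_gt0 := colsq_min_gt0.
have cos_kl_lt0 : cosine A k l < 0.
  move: beta_gt0; rewrite betaE gram_cosine // oppr_gt0; nra.
have cos_ij_lt0 := le_lt_trans cos_le cos_kl_lt0.
by rewrite cosE ltr0_norm //; apply/andP; split; nra.
Qed.

End AngleBounds.

Theorem theorem6 (R : realType) (K p n : nat) (A : 'M[R]_(p, n))
    (lab : 'I_n -> 'I_K) :
  A *m const_mx 1 = 0 :> 'cV[R]_p ->
  (forall i : 'I_n, col i A != 0) ->
  \rank (Atilde A) = (1 + p)%N ->
  ideal_graph (indicator R lab) A ->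
  let F := indicator R lab in
  let gam := spec_risk F A in
  fit_err F A = 1 /\
  gam = 1 + zeta_bar A / beta A /\
  1 + 1 / (zeta_rho A * `|cos (theta_u A)|) <= gam /\
  gam <= 1 + zeta_rho A / `|cos (theta_u A)|.
Proof.
move=> A_centered A_col_neq0 rankA ideal F gam.
have n_gt0 : (0 < n)%N by apply: leq_trans (rank_leq_col (Atilde A)); rewrite rankA.
have beta_gt0 := beta_gt0 A_centered A_col_neq0 (Ordinal n_gt0).
have Atilde_free : row_free (Atilde A) by rewrite /row_free rankA.
have gamE : gam = 1 + zeta_bar A / beta A.
  exact: spec_risk_ideal A_centered n_gt0 beta_gt0 Atilde_free ideal.
have /andP[lower upper] := ratio_bounds (colsq_min_gt0 A_col_neq0 n_gt0) beta_gt0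
  (zeta_bar_bounds A n_gt0) (beta_cos_bounds A_col_neq0 n_gt0 beta_gt0).
split; first exact: fit_err_ideal A_centered n_gt0 beta_gt0 Atilde_free ideal.
by rewrite gamE !lerD2l.
Qed.
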